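(* Suppose Assumptions A1 and A2 (stated in the context) hold, and let $\widetilde Y_n=Y_n-F_n\beta_0$. There exists an integer $N_4$ depending only on $\nu,d,\theta_0,\alpha_0,L,r_0,\kappa$ such that for any $\epsilon_1,\epsilon_2\in(0,1/2)$ and all $n>N_4$, with probability at least $1-\exp(-\log^2n)$, $$\inf\Big\{\widetilde Y_n^T\big[\Omega(\theta,\alpha,\tau)^{-1}-\Omega_0^{-1}\big]F_n(\beta-\beta_0)-\tfrac12(\beta-\beta_0)^TF_n^T\big[\Omega(\theta,\alpha,\tau)^{-1}-\Omega_0^{-1}\big]F_n(\beta-\beta_0)\Big\}\ \ge\ -8C_{\mathrm f}p^{1/2}\{\theta_0K_{\alpha_0,\nu}(0)+\tau_0\}^{1/2}\tau_0^{-1}n^{-1}-2C_{\mathrm f}^2p\,\tau_0^{-1}n^{-4},$$ where $\Omega(\theta,\alpha,\tau)=\theta K_{\alpha,\nu}(S_n)+\tau I_n$, $\Omega_0=\theta_0K_{\alpha_0,\nu}(S_n)+\tau_0I_n$, and the infimum is over all $(\theta,\alpha,\tau,\beta)$ with $|\theta/\theta_0-1|<\epsilon_1$, $|\tau/\tau_0-1|<\epsilon_2$, $\alpha>0$ and $\|\beta-\beta_0\|\le n^{-3}$.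
   Context: Model: $Y(\mathbf s)=\mathrm f(\mathbf s)^T\beta+X(\mathbf s)+\varepsilon(\mathbf s)$ on $[0,1]^d$ with known $\mathrm f=(\mathrm f_1,\dots,\mathrm f_p)^T$, $X$ zero-mean Gaussian with covariance $\theta K_{\alpha,\nu}(\mathbf s-\mathbf t)$ ($K_{\alpha,\nu}$ positive definite, $\nu>0$ fixed), $\varepsilon$ independent Gaussian white noise with variance $\tau$; true parameter $(\theta_0,\alpha_0,\tau_0,\beta_0)$, under which the probability is computed. $Y_n=(Y(\mathbf s_i))_{i\le n}$ and $F_n$ (rows $\mathrm f(\mathbf s_i)^T$) at distinct points $S_n\subset[0,1]^d$; $K_{\alpha,\nu}(S_n)=(K_{\alpha,\nu}(\mathbf s_i-\mathbf s_j))$. Spectral density $f_{\theta,\alpha,\nu}(w)=(2\pi)^{-d}\int e^{-\imath w^Tx}\theta K_{\alpha,\nu}(x)dx$. A1: $\sup_{\mathbf s^*\in[0,1]^d}\min_i\|\mathbf s^*-\mathbf s_i\|\to0$ and $|\mathrm f_l(\mathbf s)|\le C_{\mathrm f}$ for all $l,\mathbf s$. A2: (i) there exist $L>0$, $r_0\in(0,1/2)$, $\kappa>0$ such that $\sup_w|f_{\theta_0,\alpha,\nu}(w)/f_{\theta_0,\alpha_0,\nu}(w)-1|\le L|\alpha/\alpha_0-1|^\kappa$ when $|\alpha/\alpha_0-1|\le r_0$; (ii) $f_{\theta,\alpha,\nu}(w)$ is non-increasing in $\alpha$ for each $\theta,w$. *)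

From HB Require Import structures.
From mathcomp Require Import all_boot all_order all_algebra.
From mathcomp Require Import all_classical all_reals all_analysis.
Set Implicit Arguments. Unset Strict Implicit. Unset Printing Implicit Defensive.
Import Order.TTheory GRing.Theory Num.Theory.
Import numFieldNormedType.Exports.
Local Open Scope classical_set_scope.
Local Open Scope ring_scope.

Section Defs.
Context {R : realType}.

Definition dotp {d : nat} (x y : 'rV[R]_d) : R := \sum_(i < d) x ord0 i * y ord0 i.

Definition enormr {d : nat} (x : 'rV[R]_d) : R := Num.sqrt (\sum_(i < d) x ord0 i ^+ 2).
Definition enormc {p : nat} (x : 'cV[R]_p) : R := Num.sqrt (\sum_(i < p) x i ord0 ^+ 2).

Definition in_cube {d : nat} (x : 'rV[R]_d) : Prop := forall i, 0 <= x ord0 i <= 1.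

(* iterated Lebesgue integral over R^d (equal to the Lebesgue integral on R^d
   for integrable integrands, by Fubini) *)
Fixpoint iint (d : nat) (g : seq R -> R) : R :=
  match d with
  | 0 => g [::]
  | d'.+1 => \int[@lebesgue_measure R]_(x in [set: R]) iint d' (fun s => g (x :: s))
  end.

Definition row_of_seq (d : nat) (s : seq R) : 'rV[R]_d := \row_(i < d) nth 0 s i.

(* spectral density f_{theta,alpha,nu}(w) = (2 pi)^{-d} int e^{-i w^T x} theta K_{alpha,nu}(x) dx.
   K is even (positive definite real function), so the sine part vanishes and
   e^{-i w^T x} is replaced by cos(w^T x). *)
Definition specdens (d : nat) (K : R -> R -> 'rV[R]_d -> R) (nu theta alpha : R)
  (w : 'rV[R]_d) : R :=
  ((2 * pi) ^+ d)^-1 *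
  iint d (fun s => cos (dotp w (row_of_seq d s)) * (theta * K alpha nu (row_of_seq d s))).

Definition pos_def_fun (d : nat) (k : 'rV[R]_d -> R) : Prop :=
  (forall x, k (- x) = k x) /\
  forall (m : nat) (pts : 'I_m -> 'rV[R]_d) (c : 'I_m -> R),
    injective pts -> (exists i, c i != 0) ->
    0 < \sum_(i < m) \sum_(j < m) c i * c j * k (pts i - pts j).

Definition assumptionA1 (d p : nat) (S : forall n : nat, 'I_n -> 'rV[R]_d)
  (fl : 'I_p -> 'rV[R]_d -> R) (Cf : R) : Prop :=
  (forall delta : R, 0 < delta -> exists N : nat, forall n : nat, (N <= n)%N ->
     forall s, in_cube s -> exists i : 'I_n, enormr (s - S n i) <= delta) /\
  (forall (l : 'I_p) s, in_cube s -> `|fl l s| <= Cf).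

Definition assumptionA2 (d : nat) (K : R -> R -> 'rV[R]_d -> R) (nu theta0 alpha0 L r0 kappa : R)
  : Prop :=
  (0 < L /\ 0 < r0 < 2^-1 /\ 0 < kappa /\
   forall alpha : R, 0 < alpha -> `|alpha / alpha0 - 1| <= r0 ->
     forall w, `|specdens K nu theta0 alpha w / specdens K nu theta0 alpha0 w - 1|
               <= L * (`|alpha / alpha0 - 1| `^ kappa)) /\
  (forall theta : R, 0 < theta -> forall w alpha alpha', 0 < alpha -> alpha <= alpha' ->
     specdens K nu theta alpha' w <= specdens K nu theta alpha w).

Definition gaussian_rv (dT : measure_display) (T : measurableType dT)
  (P : probability T R) (Z : T -> R) (m v : R) : Prop :=
  measurable_fun [set: T] Z /\
  forall B : set R, measurable B ->
    P (Z @^-1` B) = (if v == 0 then \d_m B else normal_prob m (Num.sqrt v) B).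

(* X : zero-mean Gaussian field on [0,1]^d with covariance theta0 K(s - t),
   eps : independent Gaussian white noise with variance tau0, independent of X;
   i.e. (X, eps) is a jointly Gaussian centered family with these covariances. *)
Definition model_fields (dT : measure_display) (T : measurableType dT)
  (P : probability T R) (d : nat) (K : R -> R -> 'rV[R]_d -> R) (nu theta0 alpha0 tau0 : R)
  (X eps : 'rV[R]_d -> T -> R) : Prop :=
  forall (k : nat) (pts : 'I_k -> 'rV[R]_d) (a b : 'I_k -> R),
    (forall i, in_cube (pts i)) ->
    gaussian_rv P
      (fun w => \sum_(i < k) a i * X (pts i) w + \sum_(i < k) b i * eps (pts i) w) 0
      (\sum_(i < k) \sum_(j < k) a i * a j * (theta0 * K alpha0 nu (pts i - pts j)) +
       \sum_(i < k) \sum_(j < k) b i * b j * (if pts i == pts j then tau0 else 0)).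

Definition Kmat (d n : nat) (K : R -> R -> 'rV[R]_d -> R) (nu alpha : R)
  (pts : 'I_n -> 'rV[R]_d) : 'M[R]_n :=
  \matrix_(i < n, j < n) K alpha nu (pts i - pts j).

Definition Omega (d n : nat) (K : R -> R -> 'rV[R]_d -> R) (nu : R)
  (pts : 'I_n -> 'rV[R]_d) (theta alpha tau : R) : 'M[R]_n :=
  theta *: Kmat K nu alpha pts + tau%:M.

Definition Fmat (d p n : nat) (fl : 'I_p -> 'rV[R]_d -> R) (pts : 'I_n -> 'rV[R]_d)
  : 'M[R]_(n, p) := \matrix_(i < n, l < p) fl l (pts i).

End Defs.

From HB Require Import structures.
From mathcomp Require Import all_boot all_order all_algebra.
From mathcomp Require Import all_classical all_reals all_analysis.
From mathcomp Require Import ring lra.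
Import Order.TTheory GRing.Theory Num.Theory.
Import numFieldNormedType.Exports.
Local Open Scope classical_set_scope.
Local Open Scope ring_scope.

(* On the event that every noise value Z_i = X(s_i) + eps(s_i), which is the
   i-th entry of Ytil, satisfies |Z_i| <= 2 sigma n, where
   sigma^2 = theta0 K_{alpha0,nu}(0) + tau0, the bound is deterministic:
   Omega(theta,alpha,tau) >= tau I and Omega0 >= tau0 I with tau > tau0/2, so
   |u^T (Omega^-1 - Omega0^-1) v| <= 3/tau0 |u| |v|, while
   |Ytil| <= 2 sigma n^(3/2) and |F (beta - beta0)| <= C_f (n p)^(1/2) n^-3.
   The complementary event has probability at most n 2 exp(-3n^2/2), which is
   below exp(-ln^2 n); the Gaussian tail bound behind it comes from writing the
   N(0, s^2) density as 2 exp(-3x^2/(8s^2)) times the N(0, 4s^2) density. *)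

Lemma sum_mul_sqr_le {R : realFieldType} {n} (a b : 'I_n -> R) :
  (\sum_i a i * b i) ^+ 2 <= (\sum_i a i ^+ 2) * (\sum_i b i ^+ 2).
Proof.
have sum_prod (f g : 'I_n -> R) : \sum_i \sum_j f i * g j = (\sum_i f i) * (\sum_j g j).
  by rewrite big_distrl; apply: eq_bigr => i _; rewrite big_distrr.
have lagrange : \sum_i \sum_j (a i * b j - a j * b i) ^+ 2 =
    2 * ((\sum_i a i ^+ 2) * (\sum_i b i ^+ 2) - (\sum_i a i * b i) ^+ 2).
  transitivity (\sum_i \sum_j (a i ^+ 2 * b j ^+ 2) + \sum_i \sum_j (b i ^+ 2 * a j ^+ 2)
      + \sum_i \sum_j ((-2 * (a i * b i)) * (a j * b j))).
    rewrite -!big_split /=; apply: eq_bigr => i _; rewrite -!big_split /=.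
    by apply: eq_bigr => j _; ring.
  by rewrite !sum_prod -mulr_sumr; ring.
have : 0 <= \sum_i \sum_j (a i * b j - a j * b i) ^+ 2.
  by apply: sumr_ge0 => i _; apply: sumr_ge0 => j _; exact: sqr_ge0.
rewrite lagrange; lra.
Qed.

Section EuclideanNorm.
Context {R : realType}.

Lemma sqr_enormc {n} (a : 'cV[R]_n) : enormc a ^+ 2 = \sum_i a i ord0 ^+ 2.
Proof. by rewrite sqr_sqrtr // sumr_ge0 // => i _; exact: sqr_ge0. Qed.

Lemma enormc_ge0 {n} (a : 'cV[R]_n) : 0 <= enormc a.
Proof. exact: sqrtr_ge0. Qed.

Lemma enormc_eq0 {n} (a : 'cV[R]_n) : enormc a = 0 -> a = 0.
Proof.
move=> /(congr1 (fun x => x ^+ 2)); rewrite sqr_enormc expr0n /= => /eqP.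
rewrite psumr_eq0 => [/allP a0|i _]; last exact: sqr_ge0.
apply/matrixP => i j; rewrite (ord1 j) mxE.
by have /implyP/(_ isT) := a0 i (mem_index_enum _); rewrite sqrf_eq0 => /eqP.
Qed.

Lemma dotmx_le {n} (u v : 'cV[R]_n) : `|(u^T *m v) ord0 ord0| <= enormc u * enormc v.
Proof.
rewrite -sqrtrM ?sumr_ge0 // => [|i _]; last exact: sqr_ge0.
rewrite -sqrtr_sqr; apply: ler_wsqrtr; rewrite mxE.
under eq_bigr do rewrite mxE.
exact: sum_mul_sqr_le.
Qed.

Lemma enormc_le {n} (y : 'cV[R]_n) (b : R) : 0 <= b ->
  (forall i, `|y i ord0| <= b) -> enormc y <= Num.sqrt n%:R * b.
Proof.
move=> b_ge0 yb; rewrite -(ger0_norm b_ge0) -sqrtr_sqr -sqrtrM ?ler0n //.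
apply: ler_wsqrtr.
apply: (@le_trans _ _ (\sum_(i < n) b ^+ 2)); last by rewrite sumr_const card_ord mulr_natl.
apply: ler_sum => i _; rewrite -real_normK ?num_real //.
by rewrite lerXn2r ?nnegrE ?normr_ge0 // ger0_norm // yb.
Qed.

Lemma sqr_enormc_mulmx_le {n p} (F : 'M[R]_(n, p)) (w : 'cV[R]_p) (C : R) :
  (forall i l, `|F i l| <= C) ->
  enormc (F *m w) ^+ 2 <= (n * p)%:R * C ^+ 2 * enormc w ^+ 2.
Proof.
move=> FC; have FC2 i l : F i l ^+ 2 <= C ^+ 2.
  rewrite -real_normK ?num_real // lerXn2r ?nnegrE ?normr_ge0 //.
  exact: le_trans (normr_ge0 _) (FC i l).
rewrite sqr_enormc.
apply: (@le_trans _ _ (\sum_(i < n) (p%:R * C ^+ 2 * enormc w ^+ 2))); last first.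
  by rewrite sumr_const card_ord -[_ *+ n]mulr_natl natrM !mulrA.
apply: ler_sum => i _; rewrite mxE.
apply: le_trans (sum_mul_sqr_le (fun l => F i l) (fun l => w l ord0)) _.
rewrite sqr_enormc; apply: ler_wpM2r; first by apply: sumr_ge0 => l _; exact: sqr_ge0.
apply: (@le_trans _ _ (\sum_(l < p) C ^+ 2)); last by rewrite sumr_const card_ord mulr_natl.
by apply: ler_sum => l _; exact: FC2.
Qed.

Lemma enormc_mulmx_le {n p} (F : 'M[R]_(n, p)) (w : 'cV[R]_p) (C : R) :
  (forall i l, `|F i l| <= C) -> enormc (F *m w) <= C * Num.sqrt (n * p)%:R * enormc w.
Proof.
move=> FC; have := sqr_enormc_mulmx_le F w C FC.
have [np0 | C_ge0] : (n * p = 0)%N \/ 0 <= C.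
  case: n p F FC {w} => [|n] [|p] F FC; rewrite ?muln0; [by left..|right].
  exact: le_trans (normr_ge0 _) (FC ord0 ord0).
  rewrite np0 mul0r mul0r sqrtr0 mulr0 mul0r => le0.
  have : enormc (F *m w) ^+ 2 == 0 by rewrite eq_le le0 sqr_ge0.
  by rewrite sqrf_eq0 => /eqP ->.
move=> le2; rewrite -ler_sqr ?nnegrE ?enormc_ge0 ?mulr_ge0 ?sqrtr_ge0 //.
by rewrite !exprMn (sqr_sqrtr (ler0n R (n * p))) (mulrC (C ^+ 2)).
Qed.

End EuclideanNorm.

Section Coercive.
Context {R : realType}.

Definition coercive {n} (c : R) (M : 'M[R]_n) :=
  forall a : 'cV[R]_n, c * enormc a ^+ 2 <= (a^T *m M *m a) ord0 ord0.

Lemma coercive_unitmx {n} {c : R} {M : 'M[R]_n} : 0 < c -> coercive c M -> M \in unitmx.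
Proof.
move=> c_gt0 cM; rewrite unitmxE unitfE; apply/negP => /det0P [v v_neq0 vM].
have := cM v^T; rewrite trmxK vM mul0mx mxE pmulr_rle0 // => norm_le0.
have : enormc v^T ^+ 2 == 0 by rewrite eq_le norm_le0 sqr_ge0.
rewrite sqrf_eq0 => /eqP /enormc_eq0 /(congr1 trmx).
by rewrite trmxK trmx0 => v0; rewrite v0 eqxx in v_neq0.
Qed.

Lemma coercive_invmx_le {n} {c : R} {M : 'M[R]_n} : 0 < c -> coercive c M ->
  forall u v : 'cV[R]_n, `|(u^T *m invmx M *m v) ord0 ord0| <= enormc u * enormc v / c.
Proof.
move=> c_gt0 cM u v; set x := invmx M *m v.
have Mx : M *m x = v by rewrite /x mulmxA mulmxV ?mul1mx // (coercive_unitmx c_gt0 cM).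
have cx : c * enormc x <= enormc v.
  have [x0 | x_gt0] := eqVneq (enormc x) 0; first by rewrite x0 mulr0 enormc_ge0.
  have x_pos : 0 < enormc x by rewrite lt_def x_gt0 enormc_ge0.
  rewrite -(ler_pM2r x_pos) -mulrA -expr2 [leRHS]mulrC.
  apply: le_trans (cM x) _; rewrite -mulmxA Mx.
  exact: le_trans (ler_norm _) (dotmx_le x v).
rewrite -mulmxA -/x ler_pdivlMr //.
apply: le_trans (ler_wpM2r (ltW c_gt0) (dotmx_le u x)) _.
by rewrite -mulrA; apply: ler_wpM2l; [exact: enormc_ge0 | rewrite mulrC].
Qed.

Lemma coercive_invmxB_le {n} {tau tau0 : R} {Om Om0 : 'M[R]_n} :
  0 < tau0 -> tau0 / 2 < tau -> coercive tau Om -> coercive tau0 Om0 ->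
  forall u v : 'cV[R]_n,
    `|(u^T *m (invmx Om - invmx Om0) *m v) ord0 ord0| <= 3 / tau0 * (enormc u * enormc v).
Proof.
move=> tau0_gt0 tau_gt tauOm tau0Om0 u v.
have tau_gt0 : 0 < tau by apply: lt_trans tau_gt; rewrite divr_gt0.
have uv_ge0 : 0 <= enormc u * enormc v by rewrite mulr_ge0 ?enormc_ge0.
have entryB (A B : 'M[R]_1) : (A - B) ord0 ord0 = A ord0 ord0 - B ord0 ord0.
  by rewrite !mxE.
rewrite mulmxBr mulmxBl entryB.
apply: le_trans (ler_normB _ _) _.
apply: le_trans (lerD (coercive_invmx_le tau_gt0 tauOm u v)
                      (coercive_invmx_le tau0_gt0 tau0Om0 u v)) _.
have inv_tau : tau^-1 <= 2 / tau0.
  by rewrite -invf_div lef_pV2 ?posrE ?divr_gt0 // ltW.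
rewrite -mulrDr mulrC; apply: ler_wpM2r => //; lra.
Qed.

Lemma coercive_invmxB_quad_ge {n} {tau tau0 : R} {Om Om0 : 'M[R]_n} :
  0 < tau0 -> tau0 / 2 < tau -> coercive tau Om -> coercive tau0 Om0 ->
  forall y v : 'cV[R]_n,
    - (3 / tau0 * (enormc y * enormc v + 2^-1 * (enormc v * enormc v)))
    <= (y^T *m (invmx Om - invmx Om0) *m v) ord0 ord0
       - 2^-1 * (v^T *m (invmx Om - invmx Om0) *m v) ord0 ord0.
Proof.
move=> tau0_gt0 tau_gt cOm cOm0 y v.
have D_le := coercive_invmxB_le tau0_gt0 tau_gt cOm cOm0.
have /ler_normlP [yDv_ge _] := D_le y v; have /ler_normlP [_ vDv_le] := D_le v v.
lra.
Qed.

End Coercive.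

Section Covariance.
Context {R : realType} {d : nat} (K : R -> R -> 'rV[R]_d -> R) (nu : R).

Lemma pos_def_fun_gt0 (k : 'rV[R]_d -> R) : pos_def_fun k -> 0 < k 0.
Proof.
move=> [_ kpd]; have := kpd 1%N (fun _ => 0) (fun _ => 1).
rewrite !big_ord1 subrr !mul1r; apply; last by exists ord0; exact: oner_neq0.
by move=> i j _; rewrite (ord1 i) (ord1 j).
Qed.

Lemma quad_form_sum {n} (M : 'M[R]_n) (a : 'cV[R]_n) :
  (a^T *m M *m a) ord0 ord0 = \sum_i \sum_j a i ord0 * a j ord0 * M i j.
Proof.
rewrite mxE; under eq_bigr do rewrite mxE big_distrl.
rewrite exchange_big /=; apply: eq_bigr => i _; apply: eq_bigr => j _.
by rewrite !mxE /=; ring.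
Qed.

Lemma Kmat_quad_ge0 {n} (alpha : R) (pts : 'I_n -> 'rV[R]_d) (a : 'cV[R]_n) :
  injective pts -> pos_def_fun (K alpha nu) ->
  0 <= (a^T *m Kmat K nu alpha pts *m a) ord0 ord0.
Proof.
move=> pts_inj [_ Kpd]; rewrite quad_form_sum.
under eq_bigr do under eq_bigr do rewrite mxE.
have [[i ai_neq0] | a0] := pselect (exists i, a i ord0 != 0).
  by apply/ltW/(Kpd n pts (fun i => a i ord0)) => //; exists i.
rewrite big1 // => i _; rewrite big1 // => j _.
suff -> : a i ord0 = 0 by rewrite !mul0r.
by apply/eqP; apply: contra_notT a0 => ai; exists i.
Qed.

Lemma Omega_coercive {n} (pts : 'I_n -> 'rV[R]_d) (theta alpha tau : R) :
  injective pts -> 0 <= theta -> pos_def_fun (K alpha nu) ->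
  coercive tau (Omega K nu pts theta alpha tau).
Proof.
move=> pts_inj theta_ge0 Kpd a.
have entryZ (c : R) (A : 'M[R]_1) : (c *: A) ord0 ord0 = c * A ord0 ord0 by rewrite mxE.
rewrite /Omega mulmxDr mulmxDl -scalemxAr -scalemxAl mul_mx_scalar -scalemxAl mxE !entryZ.
have -> : (a^T *m a) ord0 ord0 = enormc a ^+ 2.
  by rewrite sqr_enormc mxE; apply: eq_bigr => i _; rewrite mxE expr2.
by rewrite lerDr mulr_ge0 // Kmat_quad_ge0.
Qed.

End Covariance.

Section DeterministicBound.
Context {R : realType}.

Lemma entry_bound_mul_sqrt_ge0 {n p} {F : 'M[R]_(n, p)} {C : R} :
  (0 < n)%N -> (forall i l, `|F i l| <= C) -> 0 <= C * Num.sqrt p%:R.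
Proof.
move=> n_gt0 FC; have [-> | p_gt0] := posnP p; first by rewrite sqrtr0 mulr0.
rewrite mulr_ge0 ?sqrtr_ge0 //.
exact: le_trans (normr_ge0 _) (FC (Ordinal n_gt0) (Ordinal p_gt0)).
Qed.

Lemma noise_design_norms_le {n p} {C s : R} {F : 'M[R]_(n, p)} {y : 'cV[R]_n}
    {w : 'cV[R]_p} :
  (0 < n)%N -> 0 <= s -> (forall i l, `|F i l| <= C) ->
  (forall i, `|y i ord0| <= 2 * s * n%:R) -> enormc w <= (n%:R ^+ 3)^-1 ->
  enormc y * enormc (F *m w) <= 2 * s * (C * Num.sqrt p%:R) * n%:R^-1 /\
  enormc (F *m w) * enormc (F *m w) <= (C * Num.sqrt p%:R) ^+ 2 * n%:R^-1 ^+ 5.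
Proof.
move=> n_gt0 s_ge0 FC yb wb; have Cq_ge0 := entry_bound_mul_sqrt_ge0 n_gt0 FC.
set m := n%:R; set k := m^-1; set Cq := C * Num.sqrt p%:R.
rewrite -exprVn -/k in wb.
have sqrt_m : Num.sqrt m ^+ 2 = m by rewrite sqr_sqrtr ?ler0n.
have mk : m * k = 1 by rewrite divff // pnatr_eq0 -lt0n.
have y_le : enormc y <= Num.sqrt m * (2 * s * m).
  by apply: enormc_le => [|i]; [rewrite !mulr_ge0 ?ler0n | exact: yb].
have v_le : enormc (F *m w) <= Num.sqrt m * Cq * k ^+ 3.
  apply: le_trans (enormc_mulmx_le F w C FC) _.
  rewrite natrM sqrtrM ?ler0n // -/m mulrCA.
  by apply: ler_wpM2l; [exact: mulr_ge0 (sqrtr_ge0 _) Cq_ge0 | exact: wb].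
split.
- apply: le_trans (ler_pM (enormc_ge0 _) (enormc_ge0 _) y_le v_le) _.
  have -> : Num.sqrt m * (2 * s * m) * (Num.sqrt m * Cq * k ^+ 3) =
      2 * s * Cq * k * ((Num.sqrt m ^+ 2 * k) * (m * k)) by ring.
  by rewrite sqrt_m mk !mulr1.
- apply: le_trans (ler_pM (enormc_ge0 _) (enormc_ge0 _) v_le v_le) _.
  have -> : Num.sqrt m * Cq * k ^+ 3 * (Num.sqrt m * Cq * k ^+ 3) =
      Cq ^+ 2 * k ^+ 5 * (Num.sqrt m ^+ 2 * k) by ring.
  by rewrite sqrt_m mk mulr1.
Qed.

Lemma cross_term_lower_bound {n p} (tau : R) {tau0 C s : R} {Om Om0 : 'M[R]_n}
    {F : 'M[R]_(n, p)} {y : 'cV[R]_n} {w : 'cV[R]_p} :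
  (0 < n)%N -> 0 < tau0 -> tau0 / 2 < tau -> 0 <= s ->
  coercive tau Om -> coercive tau0 Om0 ->
  (forall i l, `|F i l| <= C) -> (forall i, `|y i ord0| <= 2 * s * n%:R) ->
  enormc w <= (n%:R ^+ 3)^-1 ->
  - (8 * C * Num.sqrt p%:R * s / tau0 / n%:R) - 2 * C ^+ 2 * p%:R / tau0 / (n%:R ^+ 4)
  <= (y^T *m (invmx Om - invmx Om0) *m F *m w) ord0 ord0
     - 2^-1 * (w^T *m F^T *m (invmx Om - invmx Om0) *m F *m w) ord0 ord0.
Proof.
move=> n_gt0 tau0_gt0 tau_gt s_ge0 cOm cOm0 FC yb wb.
have [yv_le vv_le] := noise_design_norms_le n_gt0 s_ge0 FC yb wb.
have Cq_ge0 := entry_bound_mul_sqrt_ge0 n_gt0 FC.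
set D := invmx Om - invmx Om0.
have -> : y^T *m D *m F *m w = y^T *m D *m (F *m w) by rewrite !mulmxA.
have -> : w^T *m F^T *m D *m F *m w = (F *m w)^T *m D *m (F *m w).
  by rewrite trmx_mul !mulmxA.
apply: le_trans (coercive_invmxB_quad_ge tau0_gt0 tau_gt cOm cOm0 y (F *m w)).
set k := n%:R^-1; set Cq := C * Num.sqrt p%:R.
have k_ge0 : 0 <= k by rewrite invr_ge0 ler0n.
have t_ge0 : 0 <= tau0^-1 by rewrite invr_ge0 ltW.
have half_ge0 : 0 <= 2^-1 :> R by rewrite invr_ge0.
have := ler_wpM2l (mulr_ge0 (ler0n _ 3) t_ge0) (lerD yv_le (ler_wpM2l half_ge0 vv_le)).
have := mulr_ge0 (mulr_ge0 (mulr_ge0 s_ge0 Cq_ge0) k_ge0) t_ge0.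
have := mulr_ge0 (mulr_ge0 (sqr_ge0 Cq) (exprn_ge0 4 k_ge0)) t_ge0.
have : Cq ^+ 2 * k ^+ 5 / tau0 <= Cq ^+ 2 * k ^+ 4 / tau0.
  apply: (ler_wpM2r t_ge0); apply: (ler_wpM2l (sqr_ge0 _)).
  by rewrite exprS ler_piMl ?exprn_ge0 // invf_le1 ?ltr0n // ler1n.
have Cp : C ^+ 2 * p%:R = Cq ^+ 2 by rewrite exprMn sqr_sqrtr ?ler0n.
rewrite -[8 * C * _]mulrA -/Cq -[2 * C ^+ 2 * _]mulrA Cp -exprVn -/k.
lra.
Qed.

End DeterministicBound.

Section GaussianTail.
Context {R : realType}.

Lemma measurable_norm_gt (t : R) : measurable [set x : R | t < `|x|].
Proof.
have -> : [set x : R | t < `|x|] = (@Num.norm R R) @^-1` `]t, +oo[.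
  by apply/seteqP; split => x /=; rewrite in_itv /= andbT.
by rewrite -[_ @^-1` _]setTI; exact: measurable_realfun.normr_measurable.
Qed.

Lemma normal_pdf0_double (s x : R) : 0 < s ->
  normal_pdf 0 s x = 2 * expR (- (3 * x ^+ 2) / (8 * s ^+ 2)) * normal_pdf 0 (2 * s) x.
Proof.
move=> s_gt0; have s_neq0 := gt_eqF s_gt0.
have s2_neq0 : 2 * s != 0 by rewrite mulf_neq0 // s_neq0.
rewrite /normal_pdf s_neq0 (negbTE s2_neq0) /normal_peak /normal_fun !subr0.
have -> : Num.sqrt ((2 * s) ^+ 2 * pi *+ 2) = 2 * Num.sqrt (s ^+ 2 * pi *+ 2).
  by rewrite exprMn -mulrA -mulrnAr sqrtrM ?exprn_ge0 // sqrtr_sqr ger0_norm.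
have -> : - x ^+ 2 / (s ^+ 2 *+ 2) =
    - (3 * x ^+ 2) / (8 * s ^+ 2) + - x ^+ 2 / ((2 * s) ^+ 2 *+ 2).
  by field; rewrite s_neq0.
rewrite expRD [(2 * _)^-1]invfM; field.
by rewrite gt_eqF // sqrtr_gt0 mulrn_wgt0 // mulr_gt0 ?pi_gt0 ?exprn_gt0.
Qed.

Lemma normal_prob0_norm_gt (s t : R) : 0 < s -> 0 <= t ->
  (normal_prob 0 s [set x : R | (t < `|x|)%R] <= (2 * expR (- (3 * t ^+ 2) / (8 * s ^+ 2)))%:E)%E.
Proof.
move=> s_gt0 t_ge0; set c := 2 * expR _; set B := [set x : R | _].
apply: (@le_trans _ _ (\int[lebesgue_measure]_(x in B)
    (c%:E * (normal_pdf 0 (2 * s) x)%:E))%E).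
  apply: ge0_le_integral => //.
  - exact: measurable_norm_gt.
  - by move=> x _; rewrite lee_fin normal_pdf_ge0.
  - by apply/measurable_realfun.measurable_EFinP/measurable_funTS; exact: measurable_normal_pdf.
  - apply: emeasurable_funM => //.
    by apply/measurable_realfun.measurable_EFinP/measurable_funTS; exact: measurable_normal_pdf.
  move=> x /= tx; rewrite -EFinM lee_fin normal_pdf0_double //.
  apply: ler_wpM2r; first exact: normal_pdf_ge0.
  rewrite /c; apply: ler_wpM2l => //; rewrite ler_expR !mulNr lerN2.
  apply: ler_wpM2r; first by rewrite invr_ge0 mulr_ge0 ?exprn_ge0 ?ltW.
  apply: ler_wpM2l => //; rewrite -[x ^+ 2]real_normK ?num_real //.
  by rewrite lerXn2r ?nnegrE ?normr_ge0 // ltW.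
have c_ge0 : 0 <= c by rewrite mulr_ge0 ?expR_ge0.
rewrite ge0_integralZl_EFin //; last 3 first.
- exact: measurable_norm_gt.
- by move=> x _; rewrite lee_fin normal_pdf_ge0.
- by apply/measurable_realfun.measurable_EFinP/measurable_funTS; exact: measurable_normal_pdf.
rewrite -[X in (_ <= X)%E]mule1; apply: lee_wpmul2l; first by rewrite lee_fin.
exact: (@probability_le1 _ _ _ (normal_prob 0 (2 * s)) B (measurable_norm_gt t)).
Qed.

End GaussianTail.

Lemma Boole_inequality_ord d (R : realFieldType) (T : ringOfSetsType d)
    (mu : {content set T -> \bar R}) n (F : 'I_n -> set T) :
  (forall i, measurable (F i)) ->
  (mu (\big[setU/set0]_(i < n) F i) <= \sum_(i < n) mu (F i))%E.
Proof.
move=> mF; pose A k := if insub k is Some i then F i else set0.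
have AF (i : 'I_n) : A i = F i by rewrite /A valK.
rewrite (eq_bigr (A \o val)) => [|i _]; last by rewrite /= AF.
rewrite [leRHS](eq_bigr (mu \o A \o val)) => [|i _]; last by rewrite /= AF.
by apply: Boole_inequality => k _; rewrite /A; case: insub.
Qed.

Lemma probability_setC_bigsetU_ge {d} {T : measurableType d} {R : realType}
    (P : probability T R) {n} {F : 'I_n -> set T} {c : R} :
  (forall i, measurable (F i)) -> (forall i, (P (F i) <= c%:E)%E) ->
  ((1 - n%:R * c)%:E <= P (~` \big[setU/set0]_(i < n) F i))%E.
Proof.
move=> mF PF; rewrite probability_setC; last exact: bigsetU_measurable.
rewrite EFinB; apply: leeB => //; apply: le_trans; first exact: Boole_inequality_ord.
have -> : (n%:R * c)%:E = (\sum_(i < n) c%:E)%E.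
  by rewrite sumEFin sumr_const card_ord mulr_natl.
by apply: lee_sum => i _; exact: PF.
Qed.

Section Model.
Context {R : realType}.

Lemma ratio_close_gt_half {x x0 : R} : 0 < x0 -> `|x / x0 - 1| < 2^-1 -> x0 / 2 < x.
Proof.
move=> x0_gt0 /ltr_normlP [lt1 _]; have : 2^-1 < x / x0 by lra.
rewrite ltr_pdivlMr //; lra.
Qed.

Lemma natr_mul_expR_le_expR_ln_sqr (n : nat) : (0 < n)%N ->
  n%:R * (2 * expR (- (3 / 2 * n%:R ^+ 2))) <= expR (- ln (n%:R : R) ^+ 2).
Proof.
move=> n_gt0; have n_ge1 : 1 <= (n%:R : R) by rewrite ler1n.
have -> : n%:R * (2 * expR (- (3 / 2 * n%:R ^+ 2))) =
    expR (ln 2 + ln n%:R - 3 / 2 * (n%:R : R) ^+ 2).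
  by rewrite !expRD !lnK ?posrE ?ltr0n //; ring.
rewrite ler_expR.
have ln2_le1 : ln (2 : R) <= 1.
  by have := @le_ln1Dx R 1; rewrite (_ : (1 + 1 : R) = 2) //; apply; lra.
have ln_le : ln (n%:R : R) <= n%:R - 1.
  by have := @le_ln1Dx R (n%:R - 1); rewrite [1 + _]addrC subrK; apply; lra.
have ln_ge0 : 0 <= ln (n%:R : R) := ln_ge0 n_ge1.
nra.
Qed.

Context {dT : measure_display} {T : measurableType dT} {P : probability T R}.

Lemma model_fields_gaussian_sum {d} {K : R -> R -> 'rV[R]_d -> R} {nu theta0 alpha0 tau0 : R}
    {X eps : 'rV[R]_d -> T -> R} {s : 'rV[R]_d} :
  model_fields P K nu theta0 alpha0 tau0 X eps -> in_cube s ->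
  gaussian_rv P (fun w => X s w + eps s w) 0 (theta0 * K alpha0 nu 0 + tau0).
Proof.
move=> model s_cube.
have := model 1%N (fun _ => s) (fun _ => 1) (fun _ => 1) (fun _ => s_cube).
rewrite !big_ord1 subrr eqxx !mul1r.
by under [X in gaussian_rv _ X]funext do rewrite !big_ord1 !mul1r.
Qed.

Lemma gaussian_rv_measurable_norm_gt {Z : T -> R} {m v : R} (t : R) :
  gaussian_rv P Z m v -> measurable [set w | t < `|Z w|].
Proof.
by move=> [mZ _]; rewrite -[X in measurable X]setTI; exact: mZ (measurable_norm_gt t).
Qed.

Lemma gaussian_rv_norm_gt_le {Z : T -> R} {v t : R} :
  gaussian_rv P Z 0 v -> 0 < v -> 0 <= t ->
  (P [set w | (t < `|Z w|)%R] <= (2 * expR (- (3 * t ^+ 2) / (8 * v)))%:E)%E.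
Proof.
move=> [_ PZ] v_gt0 t_ge0.
have -> : [set w | (t < `|Z w|)%R] = Z @^-1` [set x | (t < `|x|)%R] by [].
rewrite PZ; last exact: measurable_norm_gt.
by rewrite gt_eqF // -{2}(sqr_sqrtr (ltW v_gt0)) normal_prob0_norm_gt ?sqrtr_gt0.
Qed.

Lemma gaussian_family_norm_le {n} {Z : 'I_n -> T -> R} {v : R} :
  (0 < n)%N -> 0 < v -> (forall i, gaussian_rv P (Z i) 0 v) ->
  exists A : set T, [/\ measurable A,
    A `<=` [set w | forall i, `|Z i w| <= 2 * Num.sqrt v * n%:R] &
    ((1 - expR (- ln (n%:R : R) ^+ 2))%:E <= P A)%E].
Proof.
move=> n_gt0 v_gt0 Z_gauss; set t := 2 * Num.sqrt v * n%:R.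
have t_ge0 : 0 <= t by rewrite !mulr_ge0 ?sqrtr_ge0.
have Z_meas i := gaussian_rv_measurable_norm_gt t (Z_gauss i).
exists (~` \big[setU/set0]_(i < n) [set w | t < `|Z i w|]); split.
- by apply/measurableC/bigsetU_measurable => i _.
- move=> w /= Zw i; rewrite leNgt; apply/negP => Zi_gt; apply: Zw.
  by rewrite (bigD1 i) //=; left.
have := probability_setC_bigsetU_ge P Z_meas
  (fun i => gaussian_rv_norm_gt_le (Z_gauss i) v_gt0 t_ge0).
apply: le_trans; rewrite lee_fin lerD2l lerN2.
have -> : - (3 * t ^+ 2) / (8 * v) = - (3 / 2 * n%:R ^+ 2).
  by rewrite /t !exprMn sqr_sqrtr ?ltW //; field; rewrite gt_eqF.
exact: natr_mul_expR_le_expR_ln_sqr.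
Qed.

End Model.

Theorem lemmaS6 (R : realType) (d : nat) (K : R -> R -> 'rV[R]_d -> R)
  (nu theta0 alpha0 L r0 kappa : R) :
  exists N4 : nat,
  forall (p : nat) (fl : 'I_p -> 'rV[R]_d -> R) (Cf : R)
    (S : forall n : nat, 'I_n -> 'rV[R]_d) (tau0 : R) (beta0 : 'cV[R]_p)
    (dT : measure_display) (T : measurableType dT) (P : probability T R)
    (X eps : 'rV[R]_d -> T -> R),
  0 < nu -> 0 < theta0 -> 0 < alpha0 -> 0 < tau0 ->
  (forall alpha : R, 0 < alpha -> pos_def_fun (K alpha nu)) ->
  (forall n : nat, injective (S n) /\ forall i, in_cube (S n i)) ->
  model_fields P K nu theta0 alpha0 tau0 X eps ->
  assumptionA1 S fl Cf ->
  assumptionA2 K nu theta0 alpha0 L r0 kappa ->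
  let Y : 'rV[R]_d -> T -> R :=
    fun s w => \sum_(l < p) fl l s * beta0 l ord0 + X s w + eps s w in
  forall eps1 eps2 : R, 0 < eps1 < 2^-1 -> 0 < eps2 < 2^-1 ->
  forall n : nat, (N4 < n)%N ->
  let Fn := Fmat fl (S n) in
  let Omega0 := Omega K nu (S n) theta0 alpha0 tau0 in
  let Ytil : T -> 'cV[R]_n := fun w => \col_(i < n) Y (S n i) w - Fn *m beta0 in
  exists A : set T, measurable A /\
    (A `<=` [set w : T | forall (theta alpha tau : R) (beta : 'cV[R]_p),
        `|theta / theta0 - 1| < eps1 -> `|tau / tau0 - 1| < eps2 -> 0 < alpha ->
        enormc (beta - beta0) <= (n%:R ^+ 3)^-1 ->
        let D := invmx (Omega K nu (S n) theta alpha tau) - invmx Omega0 in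
        ((Ytil w)^T *m D *m Fn *m (beta - beta0)) ord0 ord0
          - 2^-1 * ((beta - beta0)^T *m Fn^T *m D *m Fn *m (beta - beta0)) ord0 ord0
        >= - (8 * Cf * Num.sqrt p%:R * Num.sqrt (theta0 * K alpha0 nu 0 + tau0)
                 / tau0 / n%:R)
            - 2 * Cf ^+ 2 * p%:R / tau0 / (n%:R ^+ 4)]) /\
    ((1 - expR (- (ln (n%:R : R)) ^+ 2))%:E <= P A)%E.
Proof.
exists 0%N => p fl Cf S tau0 beta0 dT T P X eps _ theta0_gt0 alpha0_gt0 tau0_gt0 Kpd
  S_ok model [_ fl_le] _ Y eps1 eps2 /andP[_ eps1_lt] /andP[_ eps2_lt] n n_gt0 Fn Omega0 Ytil.
set v := theta0 * K alpha0 nu 0 + tau0.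
have v_gt0 : 0 < v.
  by rewrite addr_gt0 // mulr_gt0 //; exact: pos_def_fun_gt0 (Kpd _ alpha0_gt0).
pose Z (i : 'I_n) w := X (S n i) w + eps (S n i) w.
have Z_gauss i : gaussian_rv P (Z i) 0 v := model_fields_gaussian_sum model ((S_ok n).2 i).
have [A [A_meas A_Z A_prob]] := gaussian_family_norm_le n_gt0 v_gt0 Z_gauss.
exists A; split => //; split => // w /A_Z Z_le.
move=> theta alpha tau beta theta_close tau_close alpha_gt0 beta_close.
have theta_gt := ratio_close_gt_half theta0_gt0 (lt_trans theta_close eps1_lt).
have tau_gt := ratio_close_gt_half tau0_gt0 (lt_trans tau_close eps2_lt).
apply: (cross_term_lower_bound tau) => //.
- by apply: Omega_coercive; [exact: (S_ok n).1 | lra | exact: Kpd].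
- by apply: Omega_coercive; [exact: (S_ok n).1 | exact: ltW | exact: Kpd].
- by move=> i l; rewrite mxE; exact: fl_le ((S_ok n).2 i).
move=> i; have -> : Ytil w i ord0 = Z i w.
  by rewrite /Ytil !mxE /Y /Z; under [X in _ - X = _]eq_bigr do rewrite mxE; ring.
exact: Z_le.
Qed.
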